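(* Let $(X,d)$ be a proper metric space and $f:X\to\mathbb R_+=[0,\infty)$ a coarsely proper (not necessarily continuous) function. Then there is a continuous, proper, asymptotically Lipschitz function $q:X\to\mathbb R_+$ with $q\le f$ on $X$.
   Context: A metric space is proper if closed balls are compact. A function is coarsely proper if the preimage of every bounded set is bounded; proper if preimages of compact sets are compact; asymptotically Lipschitz if there are $\lambda,s\ge0$ with $|q(x)-q(x')|\le\lambda d(x,x')+s$. *)

From HB Require Import structures.
From mathcomp Require Import all_boot all_order all_algebra.
From mathcomp Require Import all_classical all_reals all_analysis.
Set Implicit Arguments. Unset Strict Implicit. Unset Printing Implicit Defensive.
Import Order.TTheory GRing.Theory Num.Theory.
Import numFieldTopology.Exports.
Local Open Scope classical_set_scope.
Local Open Scope ring_scope.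

Definition cball {R : realType} {X : metricType R} (x : X) (r : R) : set X :=
  [set y | mdist x y <= r].

Definition proper_space {R : realType} (X : metricType R) : Prop :=
  forall (x : X) (r : R), compact (cball x r).

Definition mbounded {R : realType} {X : metricType R} (A : set X) : Prop :=
  A = set0 \/ exists (x : X) (r : R), A `<=` cball x r.

Definition rbounded {R : realType} (B : set R) : Prop :=
  exists M : R, forall y, B y -> `|y| <= M.

Definition coarsely_proper {R : realType} {X : metricType R} (f : X -> R) : Prop :=
  forall B : set R, rbounded B -> mbounded (f @^-1` B).

Definition proper_map {R : realType} {X : metricType R} (q : X -> R) : Prop :=
  forall K : set R, compact K -> compact (q @^-1` K).

Definition asymp_lipschitz {R : realType} {X : metricType R} (q : X -> R) : Prop :=
  exists (lam s : R), 0 <= lam /\ 0 <= s /\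
    forall x x' : X, `|q x - q x'| <= lam * mdist x x' + s.

From HB Require Import structures.
From mathcomp Require Import all_boot all_order all_algebra.
From mathcomp Require Import all_classical all_reals all_analysis.
From mathcomp Require Import lra.
Set Implicit Arguments. Unset Strict Implicit. Unset Printing Implicit Defensive.
Import Order.TTheory GRing.Theory Num.Theory.
Import numFieldTopology.Exports.
Local Open Scope classical_set_scope.
Local Open Scope ring_scope.

(* Take for q the 1-Lipschitz lower envelope of f,
   q x = inf_y (f y + d(x, y)).  Taking y = x gives q <= f, and the triangle
   inequality makes q 1-Lipschitz, hence continuous and asymptotically
   Lipschitz.  If q x < t then some y has f y < t and d(x, y) < t; since f is
   coarsely proper, such y lie in a fixed ball, so the sublevel sets of q are
   bounded.  In a proper space a continuous function with bounded sublevel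
   sets is a proper map. *)

Section Lipschitz.
Variables (R : realType) (X : metricType R).

Lemma continuous_1lip (g : X -> R) :
  (forall x x', `|g x - g x'| <= mdist x x') -> continuous g.
Proof.
move=> lip x; apply/cvgrPdist_lt => e e0.
apply/metricType_numDomainType.nbhs_mdistP; exists e => //= y dxy.
exact: le_lt_trans (lip _ _) dxy.
Qed.

Lemma asymp_lipschitz_1lip (g : X -> R) :
  (forall x x', `|g x - g x'| <= mdist x x') -> asymp_lipschitz g.
Proof.
by move=> lip; exists 1, 0; do 2 split => //; move=> x x'; rewrite mul1r addr0.
Qed.

Lemma proper_map_sublevel_mbounded (g : X -> R) :
  proper_space X -> continuous g -> (forall t, mbounded [set x | g x < t]) ->
  proper_map g.
Proof.
move=> properX gc sublevel K cK.
have [M [_ KM]] := compact_bounded cK.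
have normK z : K z -> `|z| <= M + 1 by apply: KM; rewrite ltrDl.
have gK_sub : g @^-1` K `<=` [set x | g x < M + 2].
  move=> x /normK Kx; rewrite /= (le_lt_trans (ler_norm _)) //.
  by rewrite (le_lt_trans Kx) //; lra.
have [sub0 | [z [r subB]]] := sublevel (M + 2).
  suff -> : g @^-1` K = set0 by exact: compact0.
  by apply/seteqP; split => // x /gK_sub; rewrite sub0.
apply: (subclosed_compact _ (properX z r)); last exact: subset_trans subB.
apply: preimage_closed; first by move=> x _; exact: gc.
exact: compact_closed (@Rhausdorff R) cK.
Qed.

End Lipschitz.

Section LowerEnvelope.
Variables (R : realType) (X : metricType R) (f : X -> R).
Hypothesis f_ge0 : forall x, 0 <= f x.

Definition lip_envelope (x : X) : R := inf [set f y + mdist x y | y in [set: X]].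

Let envelope_set_ne x : [set f y + mdist x y | y in [set: X]] !=set0.
Proof. by exists (f x + mdist x x); exists x. Qed.

Let envelope_set_ge0 x : lbound [set f y + mdist x y | y in [set: X]] 0.
Proof. by move=> _ [y _ <-]; rewrite addr_ge0 // mdist_ge0. Qed.

Lemma lip_envelope_le x y : lip_envelope x <= f y + mdist x y.
Proof. by apply: ge_inf; [exists 0; exact: envelope_set_ge0 | exists y]. Qed.

Lemma lip_envelope_ge0 x : 0 <= lip_envelope x.
Proof.
by apply: lb_le_inf; [exact: envelope_set_ne | exact: envelope_set_ge0].
Qed.

Lemma lip_envelope_le_self x : lip_envelope x <= f x.
Proof. by rewrite (le_trans (lip_envelope_le x x)) // mdistxx addr0. Qed.

Lemma lip_envelope_1lip x x' :
  `|lip_envelope x - lip_envelope x'| <= mdist x x'.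
Proof.
have le_shift z z' : lip_envelope z <= lip_envelope z' + mdist z z'.
  rewrite -lerBlDr; apply: lb_le_inf (envelope_set_ne z') _ => _ [y _ <-].
  rewrite lerBlDr (le_trans (lip_envelope_le z y)) // -addrA lerD2l addrC.
  exact: metric_triangle.
have := le_shift x x'; have := le_shift x' x; rewrite (metric_sym x' x).
by rewrite ler_norml => h1 h2; apply/andP; split; lra.
Qed.

Lemma lip_envelope_lt x t :
  lip_envelope x < t -> exists y, `|f y| <= t /\ mdist x y <= t.
Proof.
move=> /(inf_lt (envelope_set_ne x)) [_ [y _ <-] lt_t].
exists y; rewrite ger0_norm //.
by have := f_ge0 y; have := mdist_ge0 x y; split; lra.
Qed.

Lemma lip_envelope_sublevel_mbounded t :
  coarsely_proper f -> mbounded [set x | lip_envelope x < t].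
Proof.
move=> /(_ [set s | `|s| <= t]) [|fB0 | [z [r fB_sub]]]; first by exists t.
  left; apply/seteqP; split => // x /lip_envelope_lt [y [fy _]].
  by have : (set0 : set X) y by rewrite -fB0.
right; exists z, (r + t) => x /lip_envelope_lt [y [/fB_sub zy xy]].
rewrite /cball /= (le_trans (metric_triangle z y x)) // lerD //.
by rewrite metric_sym.
Qed.

End LowerEnvelope.

Theorem proposition4p5 (R : realType) (X : metricType R) (f : X -> R) :
  proper_space X ->
  (forall x, 0 <= f x) ->
  coarsely_proper f ->
  exists q : X -> R,
    [/\ continuous q, (forall x, 0 <= q x), proper_map q, asymp_lipschitz q
      & forall x, q x <= f x].
Proof.
move=> properX f_ge0 cpf.
have q_1lip := lip_envelope_1lip f_ge0.
exists (lip_envelope f); split.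
- exact: continuous_1lip.
- exact: lip_envelope_ge0.
- apply: proper_map_sublevel_mbounded => //; first exact: continuous_1lip.
  by move=> t; exact: lip_envelope_sublevel_mbounded.
- exact: asymp_lipschitz_1lip.
- exact: lip_envelope_le_self.
Qed.
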